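(* Let $S\subseteq\mathcal{S}_d$ be nonempty, $[d]$ partitioned into groups $G_1,\dots,G_g$, $\bar\alpha,\bar\beta\in[0,1]^g$, $k\in[d]$, and assume an $(\bar\alpha,\bar\beta)$-$k$-fair ranking in $\mathcal S_d$ exists. Let $\tau$ be an $(\bar\alpha,\bar\beta)$-$k$-fair top-$k$ ranking minimizing $2\sum_{\pi\in S}\sum_{i\in D_\tau}(\pi(i)-\tau(i))\mathbb{1}[\tau(i)<\pi(i)]$, and let $\sigma\in\mathcal S_d$ be a ranking with $\sigma(a)=\tau(a)$ for all $a\in D_\tau$ that minimizes $2\sum_{\pi\in S}\sum_{i\in[d]}(\pi(i)-\sigma(i))\mathbb{1}[\sigma(i)<\pi(i)]$ among all such extensions. Let $\sigma^*$ be any $(\bar\alpha,\bar\beta)$-$k$-fair ranking in $\mathcal S_d$ minimizing $\mathrm{Obj}$, let $\mathrm{OPT}=\mathrm{Obj}(\sigma^* )$, and let $L^*=\{a\in[d]:\sigma^*(a)\le k\}$. Then $\mathrm{Obj}(\sigma)\le\overleftarrow{\mathrm{Obj}}(\sigma^*_{L^*})+\mathrm{OPT}$.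
   Context: $\mathcal{S}_d$ is the set of rankings of $[d]$, $\pi(a)$ the rank of $a$. A top-$k$ ranking is a bijection $\tau:D_\tau\to[k]$, $D_\tau\subseteq[d]$. A full or top-$k$ ranking is $(\bar\alpha,\bar\beta)$-$k$-fair if for every $i\in[g]$ the candidates at positions $1,\dots,k$ include at least $\lfloor\alpha_i k\rfloor$ and at most $\lceil\beta_i k\rceil$ members of $G_i$. For $\pi,\sigma\in\mathcal S_d$, $F(\pi,\sigma)=\sum_{i\in[d]}|\pi(i)-\sigma(i)|$ and $\mathrm{Obj}(\sigma)=\sum_{\pi\in S}F(\pi,\sigma)$. For $\sigma\in\mathcal S_d$ and $D\subseteq[d]$, $\overleftarrow{\mathrm{Obj}}(\sigma_D):=2\sum_{\pi\in S}\sum_{i\in D}(\pi(i)-\sigma(i))\mathbb{1}[\sigma(i)<\pi(i)]$. *)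

From mathcomp Require Import all_boot all_order all_algebra all_fingroup.
Set Implicit Arguments. Unset Strict Implicit. Unset Printing Implicit Defensive.
Import Order.TTheory GRing.Theory Num.Theory.

(* Candidates [d] are 'I_d (0-based); a ranking pi in S_d is a permutation
   {perm 'I_d}; the (1-based) rank of candidate a is rk pi a = pi(a)+1 in [d]. *)
Definition rk (d : nat) (pi : {perm 'I_d}) (a : 'I_d) : nat := (val (pi a)).+1.

(* The partition of [d] into groups G_1..G_g is given by grp : 'I_d -> 'I_g,
   G_i = [set a | grp a == i]. *)

(* A top-k ranking tau : D_tau -> [k] (bijection) is represented by its
   inverse, an injective map t : 'I_k -> 'I_d sending position p (0-based)
   to the candidate at rank p+1; D_tau = codom t and tau(t p) = p+1. *)
Definition topk_ranking (d k : nat) (t : {ffun 'I_k -> 'I_d}) : bool :=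
  injectiveb t.

Definition fair_counts (R : archiRealFieldType) (g k : nat)
    (alpha beta : 'I_g -> R) (cnt : 'I_g -> nat) : Prop :=
  forall i : 'I_g,
    (Num.floor (alpha i * k%:R) <= (cnt i)%:Z)%R /\
    ((cnt i)%:Z <= Num.ceil (beta i * k%:R))%R.

Definition fair_full (R : archiRealFieldType) (d g k : nat) (grp : 'I_d -> 'I_g)
    (alpha beta : 'I_g -> R) (sigma : {perm 'I_d}) : Prop :=
  fair_counts k alpha beta
    (fun i => #|[set a : 'I_d | (rk sigma a <= k) && (grp a == i)]|).

Definition fair_topk (R : archiRealFieldType) (d g k : nat) (grp : 'I_d -> 'I_g)
    (alpha beta : 'I_g -> R) (t : {ffun 'I_k -> 'I_d}) : Prop :=
  fair_counts k alpha beta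
    (fun i => #|[set p : 'I_k | grp (t p) == i]|).

Definition footrule (d : nat) (pi sigma : {perm 'I_d}) : nat :=
  \sum_(a : 'I_d) `|rk pi a - rk sigma a|.

Definition Obj (d : nat) (S : {set {perm 'I_d}}) (sigma : {perm 'I_d}) : nat :=
  \sum_(pi in S) footrule pi sigma.

(* backward objective of sigma restricted to D:
   2 sum_{pi in S} sum_{i in D} (pi(i) - sigma(i)) 1[sigma(i) < pi(i)]
   (the truncated nat difference is multiplied by the indicator, so this
   is literally the paper's expression) *)
Definition backObj (d : nat) (S : {set {perm 'I_d}}) (sigma : {perm 'I_d})
    (D : {set 'I_d}) : nat :=
  2 * \sum_(pi in S) \sum_(a in D)
        (rk pi a - rk sigma a) * (rk sigma a < rk pi a).

(* same for a top-k ranking t: sum over i in D_tau, i = t p, tau(i) = p+1 *)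
Definition backObj_topk (d k : nat) (S : {set {perm 'I_d}})
    (t : {ffun 'I_k -> 'I_d}) : nat :=
  2 * \sum_(pi in S) \sum_(p : 'I_k)
        (rk pi (t p) - p.+1) * (p.+1 < rk pi (t p)).

(* Let D be the set of candidates ranked by tau and let sigma' be the
   extension of tau that lists the candidates outside D after position k in
   the order given by sigma^*.  Since all rankings have the same rank sum, the
   footrule distance is twice the backward displacement, so
   Obj(sigma) = back(sigma) <= back(sigma') by the choice of sigma.  The part
   of back(sigma') over D is the objective of tau, which is at most that of
   the fair top-k prefix of sigma^*, namely back(sigma^*_{L^*}).  A candidate
   outside D is ranked by sigma' no earlier than by sigma^* (at most |D|
   candidates are inserted before it), so the rest of back(sigma') is at most
   the backward objective of sigma^* over all of [d], which is OPT. *)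

From mathcomp Require Import all_boot all_order all_algebra all_fingroup.
From mathcomp Require Import zify.
Set Implicit Arguments. Unset Strict Implicit. Unset Printing Implicit Defensive.
Import Order.TTheory GRing.Theory Num.Theory.

Lemma mul_subn_ltn (m n : nat) : (m - n) * (n < m) = m - n.
Proof. by case: ltnP => [_|/eqP ->]; rewrite ?muln1 ?muln0. Qed.

Lemma sum_distn_double (I : Type) (r : seq I) (F G : I -> nat) :
  \sum_(i <- r) F i = \sum_(i <- r) G i ->
  \sum_(i <- r) `|F i - G i| = 2 * \sum_(i <- r) (F i - G i).
Proof.
move=> eqFG.
have distE i : `|F i - G i| = (F i - G i) + (G i - F i).
  case: (leqP (F i) (G i)) => [le|/ltnW le].
    by rewrite distnEr // (eqP le).
  by rewrite distnEl // (eqP le) addn0.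
have maxE i : F i + (G i - F i) = G i + (F i - G i) by rewrite -!maxnE maxnC.
rewrite (eq_bigr _ (fun i _ => distE i)) big_split /=.
suff -> : \sum_(i <- r) (G i - F i) = \sum_(i <- r) (F i - G i).
  by rewrite addnn mul2n.
apply: (@addnI (\sum_(i <- r) F i)).
rewrite {2}eqFG -!big_split /=; apply: eq_bigr => i _; exact: maxE.
Qed.

Lemma card_ord_ltn (n m : nat) : m <= n -> #|[set x : 'I_n | x < m]| = m.
Proof.
move=> le_mn.
have widen_inj : injective (widen_ord le_mn) by move=> x y [/val_inj].
suff -> : [set x : 'I_n | x < m] = widen_ord le_mn @: [set: 'I_m].
  by rewrite card_imset // cardsT card_ord.
apply/setP => x; rewrite inE; apply/idP/imsetP => [lt_xm|[y _ ->]].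
  by exists (Ordinal lt_xm); rewrite ?in_setT //; apply: val_inj.
exact: (ltn_ord y).
Qed.

Lemma card_perm_ltn (n : nat) (s : {perm 'I_n}) (i : 'I_n) :
  #|[set b | s b < i]| = i.
Proof.
rewrite -[RHS](@card_ord_ltn n) ?(ltnW (ltn_ord i)) //.
rewrite -(card_preimset [set x : 'I_n | x < i] (@perm_inj _ s)).
by apply: eq_card => b; rewrite !inE.
Qed.

Lemma topk_ranking_ext (d k : nat) (t : {ffun 'I_k -> 'I_d}) (s : {perm 'I_d}) :
  (forall p, rk s (t p) = p.+1) -> topk_ranking t.
Proof.
by move=> rk_t; apply/injectiveP => p q /(congr1 (rk s)); rewrite !rk_t => -[/val_inj].
Qed.

Section Objectives.

Variables (d : nat) (S : {set {perm 'I_d}}).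

Lemma backObjE (s : {perm 'I_d}) (D : {set 'I_d}) :
  backObj S s D = 2 * \sum_(pi in S) \sum_(a in D) (rk pi a - rk s a).
Proof.
congr (2 * _); apply: eq_bigr => pi _.
by apply: eq_bigr => a _; rewrite mul_subn_ltn.
Qed.

Lemma sum_rk (s : {perm 'I_d}) : \sum_a rk s a = \sum_(a : 'I_d) (val a).+1.
Proof. by rewrite [RHS](reindex_inj (@perm_inj _ s)). Qed.

Lemma footruleE (pi s : {perm 'I_d}) :
  footrule pi s = 2 * \sum_a (rk pi a - rk s a).
Proof. by apply: sum_distn_double; rewrite !sum_rk. Qed.

Lemma Obj_backObj (s : {perm 'I_d}) : Obj S s = backObj S s [set: 'I_d].
Proof.
rewrite backObjE big_distrr; apply: eq_bigr => pi _; rewrite footruleE.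
by congr (2 * _); apply: eq_bigl => a; rewrite in_setT.
Qed.

Lemma backObj_setC (s : {perm 'I_d}) (D : {set 'I_d}) :
  backObj S s [set: 'I_d] = backObj S s D + backObj S s (~: D).
Proof.
rewrite /backObj -mulnDr -big_split; congr (2 * _); apply: eq_bigr => pi _.
rewrite (bigID (mem D)) /=; congr (_ + _); apply: eq_bigl => a.
  by rewrite in_setT.
by rewrite in_setT inE.
Qed.

Lemma backObj_subset (s : {perm 'I_d}) (D E : {set 'I_d}) :
  D \subset E -> backObj S s D <= backObj S s E.
Proof.
move=> sDE; rewrite leq_mul2l; apply/orP; right; apply: leq_sum => pi _.
by rewrite [X in _ <= X](big_setID D) (setIidPr sDE) leq_addr.
Qed.

Lemma backObj_rk_ge (s s' : {perm 'I_d}) (D : {set 'I_d}) :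
  {in D, forall a, rk s a <= rk s' a} -> backObj S s' D <= backObj S s D.
Proof.
move=> le_rk; rewrite !backObjE leq_mul2l; apply/orP; right.
apply: leq_sum => pi _; apply: leq_sum => a Da.
by rewrite leq_sub2l // le_rk.
Qed.

Lemma backObj_topkE (k : nat) (t : {ffun 'I_k -> 'I_d}) (s : {perm 'I_d}) :
  (forall p, rk s (t p) = p.+1) ->
  backObj_topk S t = backObj S s [set a in codom t].
Proof.
move=> rk_t; have /injectiveP t_inj := topk_ranking_ext rk_t.
rewrite backObjE; congr (2 * _); apply: eq_bigr => pi _.
have -> : [set a in codom t] = t @: [set: 'I_k].
  by apply/setP => a; rewrite inE; apply/codomP/imsetP => -[p]; exists p.
rewrite big_imset /=; last by move=> p q _ _; apply: t_inj.
by apply: eq_big => p; rewrite ?in_setT // rk_t mul_subn_ltn.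
Qed.

End Objectives.

Lemma codom_rk_ext (d k : nat) (t : 'I_k -> 'I_d) (s : {perm 'I_d}) :
  (forall p, rk s (t p) = p.+1) -> codom t =i [pred a | rk s a <= k].
Proof.
move=> rk_t a; rewrite inE; apply/codomP/idP => [[p ->]|le_ak].
  by rewrite rk_t ltn_ord.
exists (Ordinal le_ak); apply: (@perm_inj _ s); apply: val_inj.
by move: (rk_t (Ordinal le_ak)) => -[].
Qed.

Lemma fair_topk_ext (R : archiRealFieldType) (d g k : nat)
    (grp : 'I_d -> 'I_g) (alpha beta : 'I_g -> R)
    (t : {ffun 'I_k -> 'I_d}) (s : {perm 'I_d}) :
  (forall p, rk s (t p) = p.+1) ->
  fair_full k grp alpha beta s -> fair_topk grp alpha beta t.
Proof.
move=> rk_t fair_s i; have /injectiveP t_inj := topk_ranking_ext rk_t.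
suff -> : #|[set p | grp (t p) == i]| =
          #|[set a | (rk s a <= k) && (grp a == i)]| by exact: fair_s.
rewrite -(card_imset _ t_inj); apply: eq_card => a; rewrite inE.
apply/imsetP/andP => [[p]|[le_ak /eqP <-]].
  by rewrite inE => /eqP <- ->; rewrite rk_t ltn_ord.
have /codomP[p ->] : a \in codom t by rewrite (codom_rk_ext rk_t) inE.
by exists p; rewrite ?inE.
Qed.

Definition topk_prefix (d k : nat) (le_kd : k <= d) (s : {perm 'I_d}) :
  {ffun 'I_k -> 'I_d} := [ffun p => (s^-1)%g (widen_ord le_kd p)].

Lemma rk_topk_prefix (d k : nat) (le_kd : k <= d) (s : {perm 'I_d}) p :
  rk s (topk_prefix le_kd s p) = p.+1.
Proof. by rewrite /rk ffunE permKV. Qed.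

Section Extension.

Variables (d k : nat) (t : 'I_k -> 'I_d) (rho : {perm 'I_d}).
Hypothesis t_inj : injective t.

Let below a := #|[set b | (b \notin codom t) && (rho b < rho a)]|.

Definition ext_pos a : nat :=
  if [pick p | t p == a] is Some p then val p else k + below a.

Lemma ext_pos_codom p : ext_pos (t p) = p.
Proof.
by rewrite /ext_pos; case: pickP => [q /eqP /t_inj -> // | /(_ p)]; rewrite eqxx.
Qed.

Lemma ext_pos_notin a : a \notin codom t -> ext_pos a = k + below a.
Proof.
move=> a_out; rewrite /ext_pos; case: pickP => [p /eqP t_p|//].
by move: a_out; rewrite -t_p codom_f.
Qed.

Lemma below_ltn a b :
  a \notin codom t -> rho a < rho b -> below a < below b.
Proof.
move=> a_out lt_ab; apply: proper_card; apply/properP; split.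
  apply/subsetP => c; rewrite !inE => /andP[-> /= lt_ca]; exact: ltn_trans lt_ab.
by exists a; rewrite !inE ?a_out ?lt_ab // ltnn andbF.
Qed.

Lemma below_lt_card a : a \notin codom t -> below a < d - k.
Proof.
move=> a_out; have card_out : #|[predC codom t]| = d - k.
  have := cardC (mem (codom t)); rewrite card_codom // !card_ord => eq_d.
  by rewrite -[X in _ = X - _]eq_d addKn.
rewrite -card_out; apply: proper_card; apply/properP; split.
  by apply/subsetP => b; rewrite !inE => /andP[].
by exists a; rewrite !inE ?a_out // ltnn andbF.
Qed.

Lemma ext_pos_lt a : ext_pos a < d.
Proof.
have le_kd : k <= d by rewrite -[k]card_ord -[d]card_ord; exact: leq_card t_inj.
have [/codomP[p ->]|a_out] := boolP (a \in codom t).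
  by rewrite ext_pos_codom (leq_trans _ le_kd).
by rewrite ext_pos_notin //; have := below_lt_card a_out; lia.
Qed.

Lemma ext_pos_inj : injective ext_pos.
Proof.
move=> a b.
have [/codomP[p ->]|a_out] := boolP (a \in codom t);
have [/codomP[q ->]|b_out] := boolP (b \in codom t).
- by rewrite !ext_pos_codom => /val_inj ->.
- by rewrite ext_pos_codom ext_pos_notin //; have := ltn_ord p; lia.
- by rewrite ext_pos_codom ext_pos_notin //; have := ltn_ord q; lia.
rewrite !ext_pos_notin // => /addnI eq_below.
case: (ltngtP (rho a) (rho b)) => [lt_ab|lt_ba|/val_inj/perm_inj //].
- by have := below_ltn a_out lt_ab; lia.
- by have := below_ltn b_out lt_ba; lia.
Qed.

Definition extension : {perm 'I_d} :=
  perm (fun a b (e : Ordinal (ext_pos_lt a) = Ordinal (ext_pos_lt b)) =>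
          ext_pos_inj (congr1 val e)).

Lemma rk_extension a : rk extension a = (ext_pos a).+1.
Proof. by rewrite /rk permE. Qed.

Lemma rk_extension_codom p : rk extension (t p) = p.+1.
Proof. by rewrite rk_extension ext_pos_codom. Qed.

(* At most the k candidates of codom t are moved ahead of a. *)
Lemma rk_extension_ge a : a \notin codom t -> rk rho a <= rk extension a.
Proof.
move=> a_out; rewrite rk_extension ext_pos_notin // /rk ltnS.
have card_lt : #|[set b | rho b < rho a]| = val (rho a) := card_perm_ltn rho (rho a).
have card_in : #|[set b in codom t]| = k by rewrite cardsE card_codom // card_ord.
rewrite -card_lt -card_in.
apply: leq_trans (leq_card_setU _ [set b | (b \notin codom t) && (rho b < rho a)]).1.
apply: subset_leq_card; apply/subsetP => b; rewrite !inE => lt_ba.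
by rewrite lt_ba andbT; case: (b \in codom t).
Qed.

End Extension.

Theorem lemma4p4 (R : archiRealFieldType) (d g k : nat)
    (S : {set {perm 'I_d}}) (grp : 'I_d -> 'I_g) (alpha beta : 'I_g -> R)
    (t : {ffun 'I_k -> 'I_d}) (sigma sigma_star : {perm 'I_d}) :
  S != set0 ->
  (forall i, (0 <= alpha i <= 1)%R /\ (0 <= beta i <= 1)%R) ->
  (1 <= k <= d)%N ->
  (exists rho : {perm 'I_d}, fair_full k grp alpha beta rho) ->
  (* tau: fair top-k ranking minimizing the top-k backward objective *)
  topk_ranking t -> fair_topk grp alpha beta t ->
  (forall t' : {ffun 'I_k -> 'I_d}, topk_ranking t' ->
     fair_topk grp alpha beta t' -> (backObj_topk S t <= backObj_topk S t')%N) ->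
  (* sigma extends tau and minimizes the backward objective among extensions *)
  (forall p : 'I_k, rk sigma (t p) = p.+1) ->
  (forall sigma' : {perm 'I_d}, (forall p : 'I_k, rk sigma' (t p) = p.+1) ->
     (backObj S sigma [set: 'I_d] <= backObj S sigma' [set: 'I_d])%N) ->
  (* sigma_star: fair ranking minimizing Obj *)
  fair_full k grp alpha beta sigma_star ->
  (forall sigma' : {perm 'I_d}, fair_full k grp alpha beta sigma' ->
     (Obj S sigma_star <= Obj S sigma')%N) ->
  (Obj S sigma <=
     backObj S sigma_star [set a | (rk sigma_star a <= k)%N] + Obj S sigma_star)%N.
Proof.
move=> _ _ /andP[_ le_kd] _ /injectiveP t_inj _ tau_opt _ sigma_opt fair_star _.
set sigma' := extension sigma_star t_inj.
have rk_sigma' : forall p, rk sigma' (t p) = p.+1 := rk_extension_codom sigma_star t_inj.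
set tstar := topk_prefix le_kd sigma_star.
have rk_tstar : forall p, rk sigma_star (tstar p) = p.+1 := rk_topk_prefix le_kd sigma_star.
have tau_le_tstar : backObj_topk S t <= backObj_topk S tstar.
  exact: tau_opt (topk_ranking_ext rk_tstar) (fair_topk_ext rk_tstar fair_star).
have L_star : [set a in codom tstar] = [set a | rk sigma_star a <= k].
  by apply/setP => a; rewrite !inE (codom_rk_ext rk_tstar).
have sigma'_late : {in ~: [set a in codom t], forall a, rk sigma_star a <= rk sigma' a}.
  by move=> a; rewrite !inE; apply: rk_extension_ge.
rewrite Obj_backObj (leq_trans (sigma_opt _ rk_sigma')) //.
rewrite (backObj_setC S sigma' [set a in codom t]) Obj_backObj.
rewrite -(backObj_topkE S rk_sigma') -L_star -(backObj_topkE S rk_tstar).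
rewrite leq_add // (leq_trans (backObj_rk_ge S sigma'_late)) //.
exact: backObj_subset (subsetT _).
Qed.
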